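(* Let $k_1,k_2$ be positive integers with $1\le k_1\le k_2$ and let $p$ be an odd prime with $p\equiv 1\pmod{k_1+k_2}$. Let $M=[-k_1,k_2]^\ast$, viewed as a subset of the multiplicative group $\mathbb{Z}_p^\ast$. Then $M$ is a direct factor of $\mathbb{Z}_p^\ast$ if and only if $M$ is a direct factor of the subgroup $H=\langle -1,2,\dots,k_2\rangle$ of $\mathbb{Z}_p^\ast$.
   Context: $\mathbb{Z}_p^\ast=\mathbb{Z}_p\setminus\{0\}$ is the multiplicative group of nonzero residues modulo the prime $p$; $[a,b]^\ast=\{a,a+1,\dots,b\}\setminus\{0\}$. $\langle -1,2,\dots,k_2\rangle$ is the subgroup of $\mathbb{Z}_p^\ast$ generated by $-1,2,\dots,k_2$. For a (multiplicative) abelian group $G$ and a nonempty subset $A\subseteq G$, $A$ is a direct factor of $G$ if there is a subset $C\subseteq G$ such that every element $g\in G$ can be written uniquely as $g=ac$ with $a\in A$, $c\in C$ (a factorization $G=AC$). *)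

From HB Require Import structures.
From mathcomp Require Import all_boot all_order all_algebra all_fingroup.
Set Implicit Arguments. Unset Strict Implicit. Unset Printing Implicit Defensive.
Import GRing.Theory.

Definition direct_factor (gT : finGroupType) (A G : {set gT}) : Prop :=
  A != set0 /\ A \subset G /\
  exists C : {set gT}, C \subset G /\
    forall g, g \in G ->
      exists! ac : gT * gT, [/\ ac.1 \in A, ac.2 \in C & g = (ac.1 * ac.2)%g].

Definition intervalM (p k1 k2 : nat) : {set {unit 'F_p}} :=
  [set u : {unit 'F_p} | [exists i : 'I_(k1 + k2).+1,
     (nat_of_ord i != k1) && (val u == ((i%:R - k1%:R)%R : 'F_p))]].

Definition gensH (p k2 : nat) : {set {unit 'F_p}} :=
  [set u : {unit 'F_p} | (val u == - 1 :> 'F_p)%R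
     || [exists i : 'I_k2.+1, (1 < i)%N && (val u == (i%:R : 'F_p)%R)]].

From HB Require Import structures.
From mathcomp Require Import all_boot all_order all_algebra all_fingroup.
From mathcomp Require Import zify.
Set Implicit Arguments. Unset Strict Implicit.

(* Being a direct factor is insensitive to the ambient group:
   if A is contained in a subgroup H of a finite group G, then A is a direct
   factor of G iff it is a direct factor of H.
   - From G to H, intersect the complement C with H: in g = a * c with g in H
     and a in A <= H, the factor c = a^-1 * g already lies in H.
   - From H to G, choose a representative rho x of every right coset H x and
     let C = {x in G | x * (rho x)^-1 in C'}, where C' is a complement of A
     in H; factoring g * (rho g)^-1 in H yields the unique factorization of g.
   The theorem is the case G = Z_p^*, H = <-1, 2, ..., k2>, once we check
   that M = [-k1, k2]^* lies in H: its elements are 1, the generators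
   2, ..., k2, and their products with -1 (here k1 <= k2 is used). *)

Section DirectFactorSubgroup.

Local Open Scope group_scope.

Variables (gT : finGroupType) (G H : {group gT}) (A : {set gT}).
Hypotheses (sHG : H \subset G) (sAH : A \subset H).

Lemma direct_factor_restrict : direct_factor A G -> direct_factor A H.
Proof.
case=> [nzA [_ [C [_ factorG]]]]; split=> //; split=> //.
exists (C :&: H); split; first exact: subsetIr.
move=> g gH; have [[a c] [/= [aA cC e] uniq_ac]] := factorG g (subsetP sHG g gH).
subst g.
have cH : c \in H.
  by rewrite -(mulKg a c) groupM // groupV (subsetP sAH).
exists (a, c); split; first by split=> //; rewrite inE cC.
move=> [a' c'] /= [a'A]; rewrite inE => /andP[c'C _] e.
exact: uniq_ac.
Qed.

Let rho (x : gT) : gT := repr (H :* x).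

Let rho_quot x : x * (rho x)^-1 \in H.
Proof.
have := mem_repr_rcoset H x; rewrite mem_rcoset -/(rho x) => rxH.
by rewrite -groupV invMg invgK.
Qed.

Let rho_eq x y : y * x^-1 \in H -> rho y = rho x.
Proof.
by move=> yxH; rewrite /rho; have /rcoset_eqP -> : y \in H :* x by rewrite mem_rcoset.
Qed.

Let rho_in x : x \in G -> rho x \in G.
Proof.
move=> xG; have := mem_repr_rcoset H x; rewrite -/(rho x) => /rcosetP[h hH ->].
by rewrite groupM // (subsetP sHG).
Qed.

Lemma direct_factor_extend : direct_factor A H -> direct_factor A G.
Proof.
case=> [nzA [_ [C' [sC'H factorH]]]]; split=> //.
split; first exact: subset_trans sAH sHG.
exists [set x in G | x * (rho x)^-1 \in C']; split.
  by apply/subsetP=> x; rewrite inE => /andP[].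
move=> g gG; have [[a c'] [/= [aA c'C e] uniq_ac]] := factorH _ (rho_quot g).
have rho_c : rho (c' * rho g) = rho g.
  apply: rho_eq; rewrite -mulgA groupM ?(subsetP sC'H c' c'C) //.
  by rewrite -groupV invMg invgK rho_quot.
exists (a, c' * rho g); split.
  split=> //=; last by rewrite mulgA -e mulgKV.
  by rewrite inE groupM ?rho_in ?(subsetP (subset_trans sC'H sHG) c' c'C) //= rho_c mulgK.
move=> [a2 c2] /= [a2A]; rewrite inE => /andP[_ c2C] e2.
have rho_c2 : rho c2 = rho g.
  by apply: rho_eq; rewrite e2 invMg mulgA mulgV mul1g groupV (subsetP sAH).
rewrite rho_c2 in c2C.
have [-> ->] : (a, c') = (a2, c2 * (rho g)^-1).
  by apply: uniq_ac; split=> //=; rewrite e2 mulgA.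
by rewrite mulgKV.
Qed.

Lemma direct_factor_subgroup : direct_factor A G <-> direct_factor A H.
Proof. by split; [exact: direct_factor_restrict | exact: direct_factor_extend]. Qed.

End DirectFactorSubgroup.

Import GRing.Theory.
Local Open Scope ring_scope.

Section IntervalInH.

Variables (p k2 : nat).

Lemma nat_unit_in_H (u : {unit 'F_p}) (j : nat) :
  (1 <= j <= k2)%N -> val u = j%:R -> u \in <<gensH p k2>>%g.
Proof.
move=> /andP[j_ge1 j_lek2] uj; have [j_le1 | j_gt1] := leqP j 1.
  have -> : u = 1%g by apply: val_inj; rewrite uj FinRing.val_unit1 (_ : j = 1%N) //; lia.
  exact: group1.
apply: mem_gen; rewrite inE; apply/orP; right; apply/existsP.
by exists (Ordinal (j_lek2 : (j < k2.+1)%N)); rewrite j_gt1 /= uj.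
Qed.

Lemma opp_nat_unit_in_H (u : {unit 'F_p}) (j : nat) :
  (1 <= j <= k2)%N -> val u = - j%:R -> u \in <<gensH p k2>>%g.
Proof.
move=> j_range uj.
pose m1 : {unit 'F_p} := FinRing.Unit (unitrN1 _).
have m1H : m1 \in <<gensH p k2>>%g by apply: mem_gen; rewrite inE eqxx.
rewrite -(mulKg m1 u) groupM ?groupV //.
by apply: (nat_unit_in_H j_range); rewrite /= uj mulN1r opprK.
Qed.

Lemma intervalM_sub_H (k1 : nat) : (k1 <= k2)%N ->
  intervalM p k1 k2 \subset <<gensH p k2>>%g.
Proof.
move=> k12; apply/subsetP=> u; rewrite inE => /existsP[i /andP[i_neq_k1 /eqP ui]].
have i_lt := ltn_ord i.
case: (ltngtP i k1) i_neq_k1 => // i_k1 _.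
- apply: (@opp_nat_unit_in_H u (k1 - i)); first by apply/andP; lia.
  by rewrite ui natrB ?opprB // ltnW.
- apply: (@nat_unit_in_H u (i - k1)); first by apply/andP; lia.
  by rewrite ui natrB // ltnW.
Qed.

End IntervalInH.

Theorem theorem4p1 (k1 k2 p : nat) :
  (1 <= k1)%N -> (k1 <= k2)%N -> prime p -> odd p ->
  p = 1 %[mod k1 + k2] ->
  direct_factor (intervalM p k1 k2) [set: {unit 'F_p}] <->
  direct_factor (intervalM p k1 k2) <<gensH p k2>>%g.
Proof.
move=> _ k12 _ _ _.
exact: (direct_factor_subgroup (G := [set: {unit 'F_p}]%G)
          (H := <<gensH p k2>>%G) (subsetT _) (intervalM_sub_H p k12)).
Qed.
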